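(* $GL(\omega)$ acts transitively on the set of dense countably dimensional linear subspaces of $\omega$: for any two dense linear subspaces $E,F\subseteq\omega$ of countably infinite Hamel dimension there is $J\in GL(\omega)$ with $J(E)=F$.
   Context: $\omega=\mathbb{K}^{\mathbb{N}}$ with the product topology, $\mathbb{K}\in\{\mathbb{R},\mathbb{C}\}$. $GL(\omega)$ is the group of continuous linear bijections of $\omega$ with continuous inverse. *)

From Stdlib Require Import Reals.
Open Scope R_scope.

Definition Cx : Type := (R * R)%type.

(* The scalar field K is R or C. *)
Inductive field_choice := RealF | ComplexF.

Definition K (k : field_choice) : Type :=
  match k with RealF => R | ComplexF => Cx end.

Definition Kzero (k : field_choice) : K k :=
  match k return K k with RealF => 0 | ComplexF => (0, 0) end.

Definition Kadd (k : field_choice) : K k -> K k -> K k :=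
  match k return K k -> K k -> K k with
  | RealF => fun a b => a + b
  | ComplexF => fun z w => (fst z + fst w, snd z + snd w)
  end.

Definition Kmul (k : field_choice) : K k -> K k -> K k :=
  match k return K k -> K k -> K k with
  | RealF => fun a b => a * b
  | ComplexF => fun z w =>
      (fst z * fst w - snd z * snd w, fst z * snd w + snd z * fst w)
  end.

Definition Kopp (k : field_choice) : K k -> K k :=
  match k return K k -> K k with
  | RealF => fun a => - a
  | ComplexF => fun z => (- fst z, - snd z)
  end.

Definition Knorm (k : field_choice) : K k -> R :=
  match k return K k -> R with
  | RealF => fun a => Rabs a
  | ComplexF => fun z => sqrt (fst z * fst z + snd z * snd z)
  end.

Definition Kdist (k : field_choice) (a b : K k) : R :=
  Knorm k (Kadd k a (Kopp k b)).

Definition omega (k : field_choice) : Type := nat -> K k.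

Definition vzero (k : field_choice) : omega k := fun _ => Kzero k.
Definition vadd (k : field_choice) (x y : omega k) : omega k :=
  fun i => Kadd k (x i) (y i).
Definition vscal (k : field_choice) (a : K k) (x : omega k) : omega k :=
  fun i => Kmul k a (x i).

Fixpoint lincomb (k : field_choice) (b : nat -> omega k) (c : nat -> K k)
  (n : nat) : omega k :=
  match n with
  | O => vzero k
  | S m => vadd k (lincomb k b c m) (vscal k (c m) (b m))
  end.

(* Continuity of a map omega -> omega for the product topology
   (each coordinate of the image is continuous; basic neighbourhoods
   constrain finitely many coordinates). *)
Definition continuous_omega (k : field_choice) (T : omega k -> omega k) : Prop :=
  forall (x : omega k) (n : nat) (eps : R), 0 < eps ->
    exists (N : nat) (delta : R), 0 < delta /\
      forall y : omega k,
        (forall i, (i < N)%nat -> Kdist k (y i) (x i) < delta) ->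
        Kdist k (T y n) (T x n) < eps.

Definition is_linear_map (k : field_choice) (T : omega k -> omega k) : Prop :=
  (forall x y, T (vadd k x y) = vadd k (T x) (T y)) /\
  (forall a x, T (vscal k a x) = vscal k a (T x)).

Definition in_GL (k : field_choice) (T : omega k -> omega k) : Prop :=
  is_linear_map k T /\ continuous_omega k T /\
  exists S : omega k -> omega k,
    continuous_omega k S /\
    (forall x, S (T x) = x) /\ (forall y, T (S y) = y).

Definition is_subspace (k : field_choice) (E : omega k -> Prop) : Prop :=
  E (vzero k) /\
  (forall x y, E x -> E y -> E (vadd k x y)) /\
  (forall a x, E x -> E (vscal k a x)).

Definition dense (k : field_choice) (E : omega k -> Prop) : Prop :=
  forall (x : omega k) (N : nat) (delta : R), 0 < delta ->
    exists e, E e /\ forall i, (i < N)%nat -> Kdist k (e i) (x i) < delta.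

Definition lin_indep (k : field_choice) (b : nat -> omega k) : Prop :=
  forall (n : nat) (c : nat -> K k),
    lincomb k b c n = vzero k -> forall i, (i < n)%nat -> c i = Kzero k.

Definition countably_infinite_dim (k : field_choice) (E : omega k -> Prop) : Prop :=
  exists b : nat -> omega k,
    (forall i, E (b i)) /\ lin_indep k b /\
    (forall x, E x -> exists (n : nat) (c : nat -> K k), x = lincomb k b c n).

(* A finitely supported functional x |-> c_1 x_(i_1) + ... + c_r x_(i_r) is continuous,
   so a row-finite matrix L (a sequence of such functionals) defines a continuous linear
   map x |-> (L_n x)_n of omega, and such maps compose.  The heart of the proof is a
   normal form: for a dense subspace E spanned by a sequence (b_q) there are a
   spanning sequence (a_j) of E and an invertible row-finite L with row-finite inverse
   sending a_j to the unit vector e_j.  It comes from a back-and-forth construction of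
   a biorthogonal system (a_j, f_j), a_j in E, f_i(a_j) = delta_ij: even steps put the
   next b_q into span(a), odd steps put the next coordinate functional into span(f).
   Density of E is used exactly once, to find a point of E where a nonzero continuous
   functional does not vanish.  The rows f_i form L; the coordinate functionals in
   span(f) give a left inverse, which is two-sided because every e_j = L a_j.  Then
   J = M^(-1) L, for the normal forms L of E and M of F, maps a_j to b_j, hence E onto F. *)

From Stdlib Require Import Reals Lra Lia List Field FunctionalExtensionality
  Classical ClassicalEpsilon.
Open Scope R_scope.

Definition Kone (k : field_choice) : K k :=
  match k return K k with RealF => 1 | ComplexF => (1, 0) end.

Definition Kinv (k : field_choice) : K k -> K k :=
  match k return K k -> K k with
  | RealF => fun a => / a
  | ComplexF => fun z => (fst z / (fst z * fst z + snd z * snd z),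
                          - snd z / (fst z * fst z + snd z * snd z))
  end.

Definition Ksub (k : field_choice) (a b : K k) : K k := Kadd k a (Kopp k b).
Definition Kdiv (k : field_choice) (a b : K k) : K k := Kmul k a (Kinv k b).

Lemma K_ring_theory (k : field_choice) :
  ring_theory (Kzero k) (Kone k) (Kadd k) (Kmul k) (Ksub k) (Kopp k) eq.
Proof.
  unfold Ksub; destruct k; constructor; simpl; intros;
    try destruct x; try destruct y; try destruct z; simpl; try ring; f_equal; ring.
Qed.

Lemma K_field_theory (k : field_choice) :
  field_theory (Kzero k) (Kone k) (Kadd k) (Kmul k) (Ksub k) (Kopp k)
    (Kdiv k) (Kinv k) eq.
Proof.
  constructor.
  - apply K_ring_theory.
  - destruct k; simpl; [lra | intro H; injection H; lra].
  - reflexivity.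
  - destruct k; simpl; intros p Hp.
    + field; exact Hp.
    + destruct p as [a b]; simpl.
      assert (a * a + b * b <> 0).
      { intro H0. apply Hp. assert (a = 0) by nra. assert (b = 0) by nra.
        subst; reflexivity. }
      f_equal; field; assumption.
Qed.

Lemma Kone_neq_zero (k : field_choice) : Kone k <> Kzero k.
Proof. exact (F_1_neq_0 (K_field_theory k)). Qed.

Lemma Knorm_ge0 (k : field_choice) (a : K k) : 0 <= Knorm k a.
Proof. destruct k; simpl; [apply Rabs_pos | apply sqrt_pos]. Qed.

Lemma Knorm_zero (k : field_choice) : Knorm k (Kzero k) = 0.
Proof.
  destruct k; simpl; [apply Rabs_R0 |].
  rewrite Rmult_0_l, Rplus_0_l; apply sqrt_0.
Qed.

Lemma Knorm_pos (k : field_choice) (a : K k) : a <> Kzero k -> 0 < Knorm k a.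
Proof.
  intros Ha. destruct (Rle_lt_or_eq_dec 0 (Knorm k a) (Knorm_ge0 k a)) as [|H0];
    [assumption | exfalso; apply Ha].
  destruct k; simpl in *.
  - destruct (Req_dec a 0) as [|Hn]; [assumption |].
    exfalso; exact (Rabs_no_R0 a Hn (eq_sym H0)).
  - destruct a as [a1 a2]; simpl in *.
    symmetry in H0; apply sqrt_eq_0 in H0; [| nra].
    assert (a1 = 0) by nra. assert (a2 = 0) by nra. subst; reflexivity.
Qed.

Lemma Knorm_mul (k : field_choice) (a b : K k) :
  Knorm k (Kmul k a b) = Knorm k a * Knorm k b.
Proof.
  destruct k; simpl; [apply Rabs_mult |].
  destruct a as [a1 a2], b as [b1 b2]; simpl.
  rewrite <- sqrt_mult by nra. f_equal; ring.
Qed.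

Lemma Knorm_opp (k : field_choice) (a : K k) : Knorm k (Kopp k a) = Knorm k a.
Proof.
  destruct k; simpl; [apply Rabs_Ropp |].
  destruct a as [a1 a2]; simpl. f_equal; ring.
Qed.

(* For C this is the Cauchy-Schwarz argument: |a.b| <= |a| |b|. *)
Lemma Knorm_triangle (k : field_choice) (a b : K k) :
  Knorm k (Kadd k a b) <= Knorm k a + Knorm k b.
Proof.
  destruct k; simpl; [apply Rabs_triang |].
  destruct a as [a1 a2], b as [b1 b2]; simpl.
  set (A := a1 * a1 + a2 * a2). set (B := b1 * b1 + b2 * b2).
  assert (HA : 0 <= A) by (unfold A; nra). assert (HB : 0 <= B) by (unfold B; nra).
  assert (Hs : 0 <= sqrt A + sqrt B)
    by (pose proof (sqrt_pos A); pose proof (sqrt_pos B); lra).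
  rewrite <- (sqrt_Rsqr (sqrt A + sqrt B)) by exact Hs.
  apply sqrt_le_1_alt. unfold Rsqr.
  replace ((sqrt A + sqrt B) * (sqrt A + sqrt B))
    with (sqrt A * sqrt A + sqrt B * sqrt B + 2 * (sqrt A * sqrt B)) by ring.
  rewrite !sqrt_sqrt by assumption. rewrite <- sqrt_mult by assumption.
  assert (Hcs : a1 * b1 + a2 * b2 <= sqrt (A * B)).
  { destruct (Rle_dec (a1 * b1 + a2 * b2) 0) as [|Hpos];
      [pose proof (sqrt_pos (A * B)); lra |].
    rewrite <- (sqrt_Rsqr (a1 * b1 + a2 * b2)) by lra.
    apply sqrt_le_1_alt. unfold Rsqr, A, B.
    pose proof (Rle_0_sqr (a1 * b2 - a2 * b1)). unfold Rsqr in *. nra. }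
  unfold A, B in *. nra.
Qed.

Definition upd {T : Type} (s : nat -> T) (m : nat) (t : T) : nat -> T :=
  fun i => if Nat.eqb i m then t else s i.

Lemma upd_map {T U : Type} (g : T -> U) (s : nat -> T) (m : nat) (t : T) :
  (fun i => g (upd s m t i)) = upd (fun i => g (s i)) m (g t).
Proof.
  extensionality i. unfold upd. destruct (Nat.eqb i m); reflexivity.
Qed.

Lemma build_sequence {T : Type} (P : nat -> (nat -> T) -> Prop) (s0 : nat -> T) :
  (forall m s s', (forall i, (i < m)%nat -> s i = s' i) -> P m s -> P m s') ->
  P O s0 ->
  (forall m s, P m s -> exists t, P (S m) (upd s m t)) ->
  exists s, forall m, P m s.
Proof.
  intros Hlocal H0 Hstep.
  assert (Hnext : forall m s, exists t, P m s -> P (S m) (upd s m t)).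
  { intros m s. destruct (classic (P m s)) as [Hp | Hp].
    - destruct (Hstep m s Hp) as [t Ht]. exists t; auto.
    - exists (s0 O); contradiction. }
  destruct (choice (fun (ms : nat * (nat -> T)) (t : T) =>
                      P (fst ms) (snd ms) -> P (S (fst ms)) (upd (snd ms) (fst ms) t))
                   (fun ms => Hnext (fst ms) (snd ms))) as [next Hnext'].
  pose (seg := nat_rect (fun _ => nat -> T) s0 (fun n sn => upd sn n (next (n, sn)))).
  assert (Hseg : forall n, P n (seg n)).
  { induction n as [| n IH]; [exact H0 |]. exact (Hnext' (n, seg n) IH). }
  assert (Hstable : forall n i, (i < n)%nat -> seg n i = seg (S i) i).
  { induction n as [| n IH]; intros i Hi; [lia |].
    destruct (Nat.eq_dec i n) as [-> | Hne]; [reflexivity |].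
    cbn [seg nat_rect]. unfold upd at 1.
    destruct (Nat.eqb_spec i n); [contradiction | apply IH; lia]. }
  exists (fun i => seg (S i) i). intros m.
  apply (Hlocal m (seg m)); [exact (Hstable m) | apply Hseg].
Qed.

Section Omega.
Variable k : field_choice.
Add Field K_field : (K_field_theory k).

Local Notation KK := (K k).
Local Notation V := (omega k).
Local Notation kz := (Kzero k).
Local Notation k1 := (Kone k).
Local Notation "a +: b" := (Kadd k a b) (at level 50, left associativity).
Local Notation "a *: b" := (Kmul k a b) (at level 40, left associativity).
Local Notation "-: a" := (Kopp k a) (at level 35, right associativity).

Fixpoint ksum (n : nat) (h : nat -> KK) : KK :=
  match n with O => kz | S m => ksum m h +: h m end.

Lemma ksum_ext (n : nat) (h h' : nat -> KK) :
  (forall i, (i < n)%nat -> h i = h' i) -> ksum n h = ksum n h'.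
Proof. induction n; simpl; intros H; [reflexivity |]. rewrite IHn, H; auto. Qed.

Lemma ksum_add (n : nat) (h g : nat -> KK) :
  ksum n (fun i => h i +: g i) = ksum n h +: ksum n g.
Proof. induction n; simpl; [ring | rewrite IHn; ring]. Qed.

Lemma ksum_scal (n : nat) (c : KK) (h : nat -> KK) :
  ksum n (fun i => c *: h i) = c *: ksum n h.
Proof. induction n; simpl; [ring | rewrite IHn; ring]. Qed.

Lemma ksum_zero (n : nat) (h : nat -> KK) :
  (forall i, (i < n)%nat -> h i = kz) -> ksum n h = kz.
Proof. induction n; simpl; intros H; [reflexivity |]. rewrite IHn, H; auto; ring. Qed.

Lemma ksum_pad (n N : nat) (h : nat -> KK) :
  (n <= N)%nat -> (forall i, (n <= i < N)%nat -> h i = kz) -> ksum N h = ksum n h.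
Proof.
  induction N; intros Hle Hz; [replace n with O by lia; reflexivity |].
  destruct (Nat.eq_dec n (S N)) as [-> | Hne]; [reflexivity |].
  simpl. rewrite IHN, (Hz N) by (intros; try apply Hz; lia). ring.
Qed.

Definition kdelta (i j : nat) : KK := if Nat.eqb i j then k1 else kz.

Lemma kdelta_sym (i j : nat) : kdelta i j = kdelta j i.
Proof. unfold kdelta. rewrite Nat.eqb_sym. reflexivity. Qed.

Lemma ksum_kdelta (n m : nat) (c : nat -> KK) :
  (m < n)%nat -> ksum n (fun i => c i *: kdelta i m) = c m.
Proof.
  induction n; intros Hm; [lia |]. simpl. unfold kdelta at 2.
  destruct (Nat.eqb_spec n m) as [-> | Hne].
  - rewrite ksum_zero; [ring |].
    intros i Hi. unfold kdelta. destruct (Nat.eqb_spec i m); [lia | ring].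
  - rewrite IHn by lia. ring.
Qed.

Lemma lincomb_coord (b : nat -> V) (c : nat -> KK) (n j : nat) :
  lincomb k b c n j = ksum n (fun i => c i *: b i j).
Proof. induction n; simpl; [reflexivity | unfold vadd, vscal; rewrite IHn; reflexivity]. Qed.

Lemma lincomb_ext (b b' : nat -> V) (c c' : nat -> KK) (n : nat) :
  (forall i, (i < n)%nat -> b i = b' i /\ c i = c' i) ->
  lincomb k b c n = lincomb k b' c' n.
Proof.
  induction n; simpl; intros H; [reflexivity |].
  rewrite IHn by (intros; apply H; lia).
  destruct (H n) as [-> ->]; [lia | reflexivity].
Qed.

(* A finitely supported functional: the list [(i1,c1); ...; (ir,cr)] stands for
   x |-> c1 x_i1 + ... + cr x_ir.  These are exactly the continuous linear functionals
   on omega; [lbound l] bounds the coordinates l reads, [lnorm l] is the l1-norm of its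
   coefficients. *)
Definition functional : Type := list (nat * KK).

Fixpoint leval (l : functional) (x : V) : KK :=
  match l with nil => kz | p :: l' => (snd p *: x (fst p)) +: leval l' x end.

Fixpoint lbound (l : functional) : nat :=
  match l with nil => O | p :: l' => Nat.max (S (fst p)) (lbound l') end.

Fixpoint lnorm (l : functional) : R :=
  match l with nil => 0 | p :: l' => Knorm k (snd p) + lnorm l' end.

Definition lscale (c : KK) (l : functional) : functional :=
  map (fun p => (fst p, c *: snd p)) l.

Fixpoint lsum (n : nat) (c : nat -> KK) (f : nat -> functional) : functional :=
  match n with O => nil | S m => lsum m c f ++ lscale (c m) (f m) end.

Definition coord (q : nat) : functional := (q, k1) :: nil.

Fixpoint lcomp (l : functional) (H : nat -> functional) : functional :=
  match l with nil => nil | p :: l' => lscale (snd p) (H (fst p)) ++ lcomp l' H end.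

Lemma leval_app (l1 l2 : functional) (x : V) :
  leval (l1 ++ l2) x = leval l1 x +: leval l2 x.
Proof. induction l1; simpl; [ring | rewrite IHl1; ring]. Qed.

Lemma leval_lscale (c : KK) (l : functional) (x : V) :
  leval (lscale c l) x = c *: leval l x.
Proof. induction l; simpl; [ring | rewrite IHl; ring]. Qed.

Lemma leval_lsum (n : nat) (c : nat -> KK) (f : nat -> functional) (x : V) :
  leval (lsum n c f) x = ksum n (fun i => c i *: leval (f i) x).
Proof. induction n; simpl; [reflexivity | rewrite leval_app, leval_lscale, IHn; reflexivity]. Qed.

Lemma leval_coord (q : nat) (x : V) : leval (coord q) x = x q.
Proof. simpl. ring. Qed.

Lemma leval_lcomp (l : functional) (H : nat -> functional) (x : V) :
  leval (lcomp l H) x = leval l (fun n => leval (H n) x).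
Proof. induction l; simpl; [reflexivity | rewrite leval_app, leval_lscale, IHl; reflexivity]. Qed.

Lemma leval_vadd (l : functional) (x y : V) :
  leval l (vadd k x y) = leval l x +: leval l y.
Proof. induction l; simpl; [ring | rewrite IHl; unfold vadd; ring]. Qed.

Lemma leval_vscal (l : functional) (a : KK) (x : V) :
  leval l (vscal k a x) = a *: leval l x.
Proof. induction l; simpl; [ring | rewrite IHl; unfold vscal; ring]. Qed.

Lemma leval_vzero (l : functional) : leval l (vzero k) = kz.
Proof. induction l; simpl; [reflexivity | rewrite IHl; unfold vzero; ring]. Qed.

Lemma leval_lincomb (l : functional) (b : nat -> V) (c : nat -> KK) (n : nat) :
  leval l (lincomb k b c n) = ksum n (fun i => c i *: leval l (b i)).
Proof.
  induction n; simpl; [apply leval_vzero |].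
  rewrite leval_vadd, leval_vscal, IHn. reflexivity.
Qed.

Lemma leval_local (l : functional) (x y : V) :
  (forall i, (i < lbound l)%nat -> x i = y i) -> leval l x = leval l y.
Proof.
  induction l as [| [i c] l IH]; cbn [leval lbound fst snd]; intros H; [reflexivity |].
  rewrite IH, H by (intros; try apply H; lia). reflexivity.
Qed.

Lemma lnorm_ge0 (l : functional) : 0 <= lnorm l.
Proof. induction l; simpl; [lra | pose proof (Knorm_ge0 k (snd a)); lra]. Qed.

Lemma leval_lipschitz (l : functional) (x y : V) (d : R) :
  0 <= d -> (forall i, (i < lbound l)%nat -> Kdist k (y i) (x i) <= d) ->
  Kdist k (leval l y) (leval l x) <= lnorm l * d.
Proof.
  unfold Kdist. induction l as [| [i c] l IH]; cbn [leval lbound lnorm fst snd];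
    intros Hd Hclose.
  - replace (kz +: -: kz) with kz by ring. rewrite Knorm_zero. lra.
  - replace (c *: y i +: leval l y +: -: (c *: x i +: leval l x))
      with (c *: (y i +: -: x i) +: (leval l y +: -: leval l x)) by ring.
    eapply Rle_trans; [apply Knorm_triangle |]. rewrite Knorm_mul.
    assert (Hi : Knorm k (y i +: -: x i) <= d) by (apply Hclose; lia).
    assert (Hl : Knorm k (leval l y +: -: leval l x) <= lnorm l * d)
      by (apply IH; auto; intros; apply Hclose; lia).
    pose proof (Knorm_ge0 k c). nra.
Qed.

Definition unitv (j : nat) : V := fun i => kdelta i j.

Lemma leval_unitv_far (l : functional) (j : nat) :
  (lbound l <= j)%nat -> leval l (unitv j) = kz.
Proof.
  intros Hj. rewrite (leval_local l (unitv j) (vzero k)); [apply leval_vzero |].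
  intros i Hi. unfold unitv, vzero, kdelta. destruct (Nat.eqb_spec i j); [lia | reflexivity].
Qed.

Lemma leval_unitv_expand (l : functional) (y : V) :
  leval l y = ksum (lbound l) (fun j => leval l (unitv j) *: y j).
Proof.
  induction l as [| [i c] l IH]; cbn [leval lbound fst snd]; [reflexivity |].
  rewrite (ksum_ext _ _ (fun j => (c *: y j) *: kdelta j i +: leval l (unitv j) *: y j))
    by (intros j _; unfold unitv; rewrite kdelta_sym; ring).
  rewrite ksum_add, ksum_kdelta by lia.
  rewrite (ksum_pad (lbound l)), <- IH; [reflexivity | lia |].
  intros j Hj. rewrite leval_unitv_far by lia. ring.
Qed.

Definition matmap (L : nat -> functional) (x : V) : V := fun n => leval (L n) x.

Definition matcomp (H L : nat -> functional) : nat -> functional :=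
  fun n => lcomp (H n) L.

Lemma matmap_linear (L : nat -> functional) : is_linear_map k (matmap L).
Proof.
  split; intros; unfold matmap; extensionality n;
    [apply leval_vadd | apply leval_vscal].
Qed.

Lemma matmap_continuous (L : nat -> functional) : continuous_omega k (matmap L).
Proof.
  intros x n eps Heps. unfold matmap.
  pose proof (lnorm_ge0 (L n)) as Hn.
  set (d := eps / (lnorm (L n) + 1)).
  assert (Hd : 0 < d) by (apply Rdiv_lt_0_compat; lra).
  exists (lbound (L n)), d. split; [exact Hd |]. intros y Hy.
  eapply Rle_lt_trans; [apply leval_lipschitz with (d := d); [lra |] |].
  - intros i Hi. apply Rlt_le, Hy, Hi.
  - apply Rlt_le_trans with ((lnorm (L n) + 1) * d); [nra |].
    right. unfold d. field. lra.
Qed.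

Lemma matmap_comp (H L : nat -> functional) (x : V) :
  matmap (matcomp H L) x = matmap H (matmap L x).
Proof. extensionality n. apply leval_lcomp. Qed.

Lemma matmap_fixing_units_id (L : nat -> functional) :
  (forall j, matmap L (unitv j) = unitv j) -> forall y, matmap L y = y.
Proof.
  intros HL y. extensionality m. unfold matmap.
  assert (Hrow : forall j, leval (L m) (unitv j) = kdelta m j)
    by (intros j; exact (f_equal (fun z => z m) (HL j))).
  rewrite leval_unitv_expand.
  rewrite (ksum_ext _ _ (fun j => y j *: kdelta j m))
    by (intros j _; rewrite Hrow, kdelta_sym; ring).
  destruct (Nat.lt_ge_cases m (lbound (L m))) as [Hm | Hm].
  - apply ksum_kdelta, Hm.
  - exfalso. apply (Kone_neq_zero k).
    rewrite <- (leval_unitv_far (L m) m Hm), Hrow. unfold kdelta. rewrite Nat.eqb_refl.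
    reflexivity.
Qed.

Definition inverse_pair (L L' : nat -> functional) : Prop :=
  (forall x, matmap L' (matmap L x) = x) /\ (forall y, matmap L (matmap L' y) = y).

Lemma inverse_pair_sym (L L' : nat -> functional) :
  inverse_pair L L' -> inverse_pair L' L.
Proof. intros [H1 H2]. split; assumption. Qed.

Lemma inverse_pair_comp (L L' M M' : nat -> functional) :
  inverse_pair L L' -> inverse_pair M M' -> inverse_pair (matcomp M L) (matcomp L' M').
Proof.
  intros [HL1 HL2] [HM1 HM2]. split; intros; rewrite !matmap_comp.
  - rewrite HM1. apply HL1.
  - rewrite HL2. apply HM2.
Qed.

Lemma inverse_pair_GL (L L' : nat -> functional) :
  inverse_pair L L' -> in_GL k (matmap L).
Proof.
  intros [H1 H2]. split; [apply matmap_linear |]. split; [apply matmap_continuous |].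
  exists (matmap L'). split; [apply matmap_continuous | split; assumption].
Qed.

Lemma left_inverse_of_spanning_rows (L : nat -> functional) :
  (forall q, exists n c, forall x, x q = ksum n (fun i => c i *: leval (L i) x)) ->
  exists L', forall x, matmap L' (matmap L x) = x.
Proof.
  intros Hrows.
  destruct (choice (fun (q : nat) (nc : nat * (nat -> KK)) =>
                      forall x, x q = ksum (fst nc) (fun i => snd nc i *: leval (L i) x))
                   (fun q => let (n, Hn) := Hrows q in let (c, Hc) := Hn in ex_intro _ (n, c) Hc))
    as [nc Hnc].
  exists (fun q => lsum (fst (nc q)) (snd (nc q)) coord). intros x.
  extensionality q. unfold matmap at 1. rewrite leval_lsum, Hnc.
  apply ksum_ext. intros i _. rewrite leval_coord. reflexivity.
Qed.

(* A left inverse is two-sided once every unit vector lies in the range of L: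
   then L L' fixes all unit vectors. *)
Lemma left_inverse_two_sided (L L' : nat -> functional) :
  (forall x, matmap L' (matmap L x) = x) ->
  (forall j, exists a, matmap L a = unitv j) -> inverse_pair L L'.
Proof.
  intros Hleft Hrange. split; [exact Hleft |].
  intros y. rewrite <- matmap_comp. apply matmap_fixing_units_id.
  intros j. destruct (Hrange j) as [a Ha].
  rewrite matmap_comp, <- Ha, Hleft. reflexivity.
Qed.

Definition in_span (m : nat) (a : nat -> V) (v : V) : Prop :=
  exists c, v = lincomb k a c m.

Definition fun_in_span (m : nat) (f : nat -> functional) (g : functional) : Prop :=
  exists c, forall x, leval g x = ksum m (fun i => c i *: leval (f i) x).

Definition spanning_seq (E : V -> Prop) (a : nat -> V) : Prop :=
  (forall j, E (a j)) /\ (forall x, E x -> exists n, in_span n a x).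

Lemma subspace_lincomb (E : V -> Prop) (b : nat -> V) (c : nat -> KK) (n : nat) :
  is_subspace k E -> (forall i, (i < n)%nat -> E (b i)) -> E (lincomb k b c n).
Proof.
  intros [H0 [Hadd Hscal]]. induction n; simpl; intros Hb; [exact H0 |].
  apply Hadd; [apply IHn; intros; apply Hb; lia | apply Hscal, Hb; lia].
Qed.

Lemma linear_lincomb (T : V -> V) (b : nat -> V) (c : nat -> KK) (n : nat) :
  is_linear_map k T -> T (lincomb k b c n) = lincomb k (fun i => T (b i)) c n.
Proof.
  intros [Hadd Hscal]. induction n; simpl.
  - replace (vzero k) with (vscal k kz (vzero k))
      by (extensionality i; unfold vscal, vzero; ring).
    rewrite Hscal. extensionality i. unfold vscal, vzero. ring.
  - rewrite Hadd, Hscal, IHn. reflexivity.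
Qed.

Lemma span_add (a : nat -> V) (x y : V) (n n' : nat) :
  in_span n a x -> in_span n' a y -> in_span (n + n') a (vadd k x y).
Proof.
  intros [c ->] [c' ->].
  exists (fun i => (if Nat.ltb i n then c i else kz) +: (if Nat.ltb i n' then c' i else kz)).
  extensionality j. unfold vadd. rewrite !lincomb_coord.
  rewrite (ksum_ext (n + n') _
            (fun i => (if Nat.ltb i n then c i else kz) *: a i j
                      +: (if Nat.ltb i n' then c' i else kz) *: a i j)) by (intros; ring).
  rewrite ksum_add, (ksum_pad n (n + n')), (ksum_pad n' (n + n')); try lia;
    try (intros i Hi; destruct (Nat.ltb_spec i n); destruct (Nat.ltb_spec i n');
         solve [lia | ring]).
  f_equal; apply ksum_ext; intros i Hi;
    [destruct (Nat.ltb_spec i n) | destruct (Nat.ltb_spec i n')]; solve [reflexivity | lia].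
Qed.

Lemma span_scal (a : nat -> V) (s : KK) (x : V) (n : nat) :
  in_span n a x -> in_span n a (vscal k s x).
Proof.
  intros [c ->]. exists (fun i => s *: c i).
  extensionality j. unfold vscal. rewrite !lincomb_coord, <- ksum_scal.
  apply ksum_ext. intros; ring.
Qed.

Lemma span_lincomb (a b : nat -> V) (c : nat -> KK) (n : nat) :
  (forall i, (i < n)%nat -> exists m, in_span m a (b i)) ->
  exists m, in_span m a (lincomb k b c n).
Proof.
  induction n as [| n IH]; intros Hb; [exists O, (fun _ => kz); reflexivity |].
  destruct IH as [m1 H1]; [intros; apply Hb; lia |].
  destruct (Hb n) as [m2 H2]; [lia |].
  exists (m1 + m2)%nat. apply span_add; [exact H1 | apply span_scal, H2].
Qed.

Lemma linear_image_of_spanning (T : V -> V) (E F : V -> Prop) (a b : nat -> V) :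
  is_linear_map k T -> (forall j, T (a j) = b j) ->
  is_subspace k E -> spanning_seq E a -> is_subspace k F -> spanning_seq F b ->
  forall y, F y <-> exists x, E x /\ T x = y.
Proof.
  intros HT HTa HE [HaE Ha] HF [HbF Hb] y.
  assert (Hcomb : forall c n, T (lincomb k a c n) = lincomb k b c n).
  { intros c n. rewrite linear_lincomb by exact HT.
    apply lincomb_ext. intros i _. split; [apply HTa | reflexivity]. }
  split.
  - intros Hy. destruct (Hb y Hy) as [n [c ->]].
    exists (lincomb k a c n). split; [apply subspace_lincomb; auto | apply Hcomb].
  - intros [x [Hx <-]]. destruct (Ha x Hx) as [n [c ->]].
    rewrite Hcomb. apply subspace_lincomb; auto.
Qed.

Lemma lincomb_upd (a : nat -> V) (c : nat -> KK) (m : nat) (an : V) (d : KK) :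
  lincomb k (upd a m an) (upd c m d) (S m) = vadd k (lincomb k a c m) (vscal k d an).
Proof.
  simpl. unfold upd at 3 4. rewrite Nat.eqb_refl. f_equal.
  apply lincomb_ext. intros i Hi. unfold upd.
  destruct (Nat.eqb_spec i m); [lia | split; reflexivity].
Qed.

Lemma ksum_upd (c : nat -> KK) (f : nat -> functional) (m : nat) (fn : functional)
    (d : KK) (x : V) :
  ksum (S m) (fun i => upd c m d i *: leval (upd f m fn i) x)
  = ksum m (fun i => c i *: leval (f i) x) +: d *: leval fn x.
Proof.
  simpl. unfold upd at 3 4. rewrite Nat.eqb_refl. f_equal.
  apply ksum_ext. intros i Hi. unfold upd. destruct (Nat.eqb_spec i m); [lia | reflexivity].
Qed.

Lemma bound_below (g : nat -> nat) (m : nat) :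
  exists M, forall i, (i < m)%nat -> (g i <= M)%nat.
Proof.
  induction m as [| m [M HM]]; [exists O; lia |].
  exists (Nat.max M (g m)). intros i Hi.
  destruct (Nat.eq_dec i m) as [-> | Hne]; [lia | specialize (HM i ltac:(lia)); lia].
Qed.

Section Biorthogonal.
Variable E : V -> Prop.
Hypothesis HEs : is_subspace k E.
Hypothesis HEd : dense k E.

Definition biorth (m : nat) (a : nat -> V) (f : nat -> functional) : Prop :=
  (forall i, (i < m)%nat -> E (a i)) /\
  (forall i j, (i < m)%nat -> (j < m)%nat -> leval (f i) (a j) = kdelta i j).

Definition extends (m : nat) (a : nat -> V) (f : nat -> functional) (an : V)
    (fn : functional) : Prop :=
  E an /\ leval fn an = k1 /\ (forall i, (i < m)%nat -> leval fn (a i) = kz) /\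
  (forall i, (i < m)%nat -> leval (f i) an = kz).

Lemma biorth_extend (m : nat) (a : nat -> V) (f : nat -> functional) (an : V)
    (fn : functional) :
  biorth m a f -> extends m a f an fn -> biorth (S m) (upd a m an) (upd f m fn).
Proof.
  intros [HaE Hbo] [HanE [Hnn [Hna Hfn]]]. unfold upd. split.
  - intros i Hi. destruct (Nat.eqb_spec i m); [assumption | apply HaE; lia].
  - intros i j Hi Hj. unfold kdelta.
    destruct (Nat.eqb_spec i m) as [-> | Him]; destruct (Nat.eqb_spec j m) as [-> | Hjm].
    + rewrite Nat.eqb_refl. exact Hnn.
    + rewrite Hna by lia. destruct (Nat.eqb_spec m j); [lia | reflexivity].
    + rewrite Hfn by lia. destruct (Nat.eqb_spec i m); [lia | reflexivity].
    + apply Hbo; lia.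
Qed.

(* The projection of a vector onto the common kernel of f_0, ..., f_(m-1)
   along span(a_0, ..., a_(m-1)). *)
Definition vproj (m : nat) (a : nat -> V) (f : nat -> functional) (v : V) : V :=
  vadd k v (vscal k (-: k1) (lincomb k a (fun i => leval (f i) v) m)).

Lemma vproj_decomp (m : nat) (a : nat -> V) (f : nat -> functional) (v : V) :
  v = vadd k (lincomb k a (fun i => leval (f i) v) m) (vproj m a f v).
Proof. extensionality j. unfold vproj, vadd, vscal. ring. Qed.

Lemma vproj_in_E (m : nat) (a : nat -> V) (f : nat -> functional) (v : V) :
  biorth m a f -> E v -> E (vproj m a f v).
Proof.
  intros [HaE _] Hv. destruct HEs as [_ [Hadd Hscal]].
  apply Hadd; [exact Hv | apply Hscal, subspace_lincomb; assumption].
Qed.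

Lemma vproj_annihilated (m : nat) (a : nat -> V) (f : nat -> functional) (v : V) (i : nat) :
  biorth m a f -> (i < m)%nat -> leval (f i) (vproj m a f v) = kz.
Proof.
  intros [_ Hbo] Hi. unfold vproj.
  rewrite leval_vadd, leval_vscal, leval_lincomb.
  rewrite (ksum_ext _ _ (fun j => leval (f j) v *: kdelta j i))
    by (intros; rewrite Hbo, kdelta_sym by assumption; reflexivity).
  rewrite ksum_kdelta by exact Hi. ring.
Qed.

(* Dually, the projection of a functional onto the annihilator of a_0, ..., a_(m-1). *)
Definition fproj (m : nat) (a : nat -> V) (f : nat -> functional) (g : functional)
  : functional := g ++ lsum m (fun i => -: leval g (a i)) f.

Lemma leval_fproj (m : nat) (a : nat -> V) (f : nat -> functional) (g : functional) (x : V) :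
  leval (fproj m a f g) x
  = leval g x +: -: ksum m (fun i => leval g (a i) *: leval (f i) x).
Proof.
  unfold fproj. rewrite leval_app, leval_lsum.
  rewrite (ksum_ext _ _ (fun i => -: k1 *: (leval g (a i) *: leval (f i) x)))
    by (intros; ring).
  rewrite ksum_scal. ring.
Qed.

Lemma fproj_annihilates (m : nat) (a : nat -> V) (f : nat -> functional) (g : functional)
    (j : nat) :
  biorth m a f -> (j < m)%nat -> leval (fproj m a f g) (a j) = kz.
Proof.
  intros [_ Hbo] Hj. rewrite leval_fproj.
  rewrite (ksum_ext _ _ (fun i => leval g (a i) *: kdelta i j))
    by (intros; rewrite Hbo by assumption; reflexivity).
  rewrite ksum_kdelta by exact Hj. ring.
Qed.

Lemma extend_by_vector (m : nat) (a : nat -> V) (f : nat -> functional) (w : V) (j : nat) :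
  biorth m a f -> E w -> (forall i, (i < m)%nat -> leval (f i) w = kz) -> w j <> kz ->
  extends m a f w (fproj m a f (lscale (Kinv k (w j)) (coord j))).
Proof.
  intros Hbi Hw Hfw Hj. split; [exact Hw | split; [| split]].
  - rewrite leval_fproj, ksum_zero by (intros; rewrite Hfw by assumption; ring).
    rewrite leval_lscale, leval_coord. field. exact Hj.
  - intros i Hi. apply fproj_annihilates; assumption.
  - exact Hfw.
Qed.

Lemma extend_by_functional (m : nat) (a : nat -> V) (f : nat -> functional)
    (g : functional) (x : V) :
  biorth m a f -> (forall i, (i < m)%nat -> leval g (a i) = kz) -> E x ->
  leval g x <> kz -> extends m a f (vscal k (Kinv k (leval g x)) (vproj m a f x)) g.
Proof.
  intros Hbi Hga Hx Hgx. split; [| split; [| split]].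
  - destruct HEs as [_ [_ Hscal]]. apply Hscal, vproj_in_E; assumption.
  - rewrite leval_vscal. unfold vproj.
    rewrite leval_vadd, leval_vscal, leval_lincomb,
      ksum_zero by (intros; rewrite Hga by assumption; ring).
    field. exact Hgx.
  - exact Hga.
  - intros i Hi. rewrite leval_vscal, vproj_annihilated by assumption. ring.
Qed.

Lemma nonvanishing_on_E (g : functional) (x : V) :
  leval g x <> kz -> exists y, E y /\ leval g y <> kz.
Proof.
  intros Hgx. pose proof (Knorm_pos k _ Hgx) as Hpos. pose proof (lnorm_ge0 g) as Hl.
  set (d := Knorm k (leval g x) / (lnorm g + 1)).
  assert (Hd : 0 < d) by (apply Rdiv_lt_0_compat; lra).
  destruct (HEd x (lbound g) d Hd) as [y [HyE Hyx]].
  exists y. split; [exact HyE |]. intros Hgy.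
  assert (Hclose : Kdist k (leval g y) (leval g x) <= lnorm g * d)
    by (apply leval_lipschitz; [lra | intros; apply Rlt_le, Hyx; assumption]).
  unfold Kdist in Hclose. rewrite Hgy in Hclose.
  replace (kz +: -: leval g x) with (-: leval g x) in Hclose by ring.
  rewrite Knorm_opp in Hclose.
  assert (lnorm g * d < Knorm k (leval g x)).
  { apply Rlt_le_trans with ((lnorm g + 1) * d); [nra |]. right. unfold d. field. lra. }
  lra.
Qed.

(* Every biorthogonal system can be extended: project the coordinate functional of
   an index M beyond the supports of f_0, ..., f_(m-1). *)
Lemma extend_any (m : nat) (a : nat -> V) (f : nat -> functional) :
  biorth m a f -> exists an fn, extends m a f an fn.
Proof.
  intros Hbi. destruct (bound_below (fun i => lbound (f i)) m) as [M HM].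
  set (g := fproj m a f (coord M)).
  assert (Hg : leval g (unitv M) <> kz).
  { unfold g. rewrite leval_fproj, leval_coord.
    rewrite ksum_zero by (intros; rewrite leval_unitv_far by (apply HM; assumption); ring).
    unfold unitv, kdelta. rewrite Nat.eqb_refl.
    replace (k1 +: -: kz) with k1 by ring. apply Kone_neq_zero. }
  destruct (nonvanishing_on_E g _ Hg) as [x [Hx Hgx]].
  eexists; eexists. apply extend_by_functional; try eassumption.
  intros; apply fproj_annihilates; assumption.
Qed.

Lemma absorb_vector (m : nat) (a : nat -> V) (f : nat -> functional) (v : V) :
  biorth m a f -> E v ->
  exists an fn, extends m a f an fn /\ in_span (S m) (upd a m an) v.
Proof.
  intros Hbi Hv. set (c := fun i => leval (f i) v).
  destruct (classic (exists j, vproj m a f v j <> kz)) as [[j Hj] | Hzero].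
  - exists (vproj m a f v), (fproj m a f (lscale (Kinv k (vproj m a f v j)) (coord j))).
    split.
    + apply extend_by_vector; try assumption.
      * apply vproj_in_E; assumption.
      * intros; apply vproj_annihilated; assumption.
    + exists (upd c m k1). rewrite lincomb_upd, (vproj_decomp m a f v) at 1.
      f_equal. extensionality i. unfold vscal. ring.
  - destruct (extend_any m a f Hbi) as [an [fn Hext]].
    exists an, fn. split; [exact Hext |].
    exists (upd c m kz). rewrite lincomb_upd, (vproj_decomp m a f v) at 1.
    f_equal. extensionality i. unfold vscal.
    assert (Hi : vproj m a f v i = kz) by (apply NNPP; intros Hne; apply Hzero; eauto).
    rewrite Hi. ring.
Qed.

Lemma absorb_functional (m : nat) (a : nat -> V) (f : nat -> functional) (g : functional) :
  biorth m a f ->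
  exists an fn, extends m a f an fn /\ fun_in_span (S m) (upd f m fn) g.
Proof.
  intros Hbi. set (g' := fproj m a f g). set (c := fun i => leval g (a i)).
  assert (Hsplit : forall x,
            leval g x = leval g' x +: ksum m (fun i => c i *: leval (f i) x))
    by (intros; unfold g', c; rewrite leval_fproj; ring).
  destruct (classic (exists x, leval g' x <> kz)) as [[x Hx] | Hzero].
  - destruct (nonvanishing_on_E g' x Hx) as [y [Hy Hgy]].
    eexists; exists g'. split.
    + apply extend_by_functional; try eassumption.
      intros; apply fproj_annihilates; assumption.
    + exists (upd c m k1). intros z. rewrite ksum_upd, Hsplit. ring.
  - destruct (extend_any m a f Hbi) as [an [fn Hext]].
    exists an, fn. split; [exact Hext |].
    exists (upd c m kz). intros z. rewrite ksum_upd, Hsplit.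
    assert (Hz : leval g' z = kz) by (apply NNPP; intros Hne; apply Hzero; eauto).
    rewrite Hz. ring.
Qed.

Section BackAndForth.
Variable b : nat -> V.
Hypothesis HbE : forall q, E (b q).

Definition goal (n : nat) (a : nat -> V) (f : nat -> functional) : Prop :=
  if Nat.even n then in_span (S n) a (b (Nat.div2 n))
  else fun_in_span (S n) f (coord (Nat.div2 n)).

Definition stage (m : nat) (a : nat -> V) (f : nat -> functional) : Prop :=
  biorth m a f /\ forall n, (n < m)%nat -> goal n a f.

Lemma stage_local (m : nat) (a a' : nat -> V) (f f' : nat -> functional) :
  (forall i, (i < m)%nat -> a i = a' i /\ f i = f' i) -> stage m a f -> stage m a' f'.
Proof.
  intros Hag [[HaE Hbo] Hgoal]. split; [split |].
  - intros i Hi. destruct (Hag i Hi) as [<- _]. auto.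
  - intros i j Hi Hj. destruct (Hag i Hi) as [_ <-], (Hag j Hj) as [<- _]. auto.
  - intros n Hn. specialize (Hgoal n Hn). unfold goal in *.
    destruct (Nat.even n); destruct Hgoal as [c Hc]; exists c.
    + rewrite Hc. apply lincomb_ext. intros i Hi. split; [apply Hag; lia | reflexivity].
    + intros x. rewrite Hc. apply ksum_ext. intros i Hi.
      destruct (Hag i ltac:(lia)) as [_ ->]. reflexivity.
Qed.

Lemma stage_step (m : nat) (a : nat -> V) (f : nat -> functional) :
  stage m a f -> exists an fn, stage (S m) (upd a m an) (upd f m fn).
Proof.
  intros [Hbi Hgoal].
  assert (Hnew : exists an fn, extends m a f an fn /\ goal m (upd a m an) (upd f m fn)).
  { unfold goal. destruct (Nat.even m);
      [apply absorb_vector; auto | apply absorb_functional; auto]. }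
  destruct Hnew as [an [fn [Hext Hm]]]. exists an, fn.
  assert (Hold : stage m (upd a m an) (upd f m fn)).
  { apply (stage_local m a _ f); [| split; assumption].
    intros i Hi. unfold upd. destruct (Nat.eqb_spec i m); [lia | split; reflexivity]. }
  split; [apply biorth_extend; assumption |].
  intros n Hn. destruct (Nat.eq_dec n m) as [-> | Hne]; [exact Hm | apply Hold; lia].
Qed.

Lemma back_and_forth : exists (a : nat -> V) (f : nat -> functional),
  (forall j, E (a j)) /\ (forall i j, leval (f i) (a j) = kdelta i j) /\
  (forall q, exists n, in_span n a (b q)) /\
  (forall q, exists n, fun_in_span n f (coord q)).
Proof.
  destruct (build_sequence (fun m s => stage m (fun i => fst (s i)) (fun i => snd (s i)))
              (fun _ => (vzero k, nil))) as [s Hs].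
  - intros m s s' Hag. apply stage_local. intros i Hi. rewrite (Hag i Hi). split; reflexivity.
  - split; [split |]; intros; lia.
  - intros m s Hst. destruct (stage_step _ _ _ Hst) as [an [fn Hnext]].
    exists (an, fn). rewrite (upd_map fst), (upd_map snd). exact Hnext.
  - exists (fun i => fst (s i)), (fun i => snd (s i)). split; [| split; [| split]].
    + intros j. destruct (Hs (S j)) as [[HaE _] _]. apply HaE; lia.
    + intros i j. destruct (Hs (S (Nat.max i j))) as [[_ Hbo] _]. apply Hbo; lia.
    + intros q. exists (S (2 * q)).
      pose proof (proj2 (Hs (S (2 * q))) (2 * q)%nat ltac:(lia)) as G. unfold goal in G.
      replace (Nat.even (2 * q)) with true in G by (rewrite Nat.even_mul; reflexivity).
      rewrite Nat.div2_double in G. exact G.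
    + intros q. exists (S (S (2 * q))).
      pose proof (proj2 (Hs (S (S (2 * q)))) (S (2 * q)) ltac:(lia)) as G. unfold goal in G.
      replace (Nat.even (S (2 * q))) with false in G
        by (rewrite Nat.even_succ, Nat.odd_mul; reflexivity).
      rewrite Nat.div2_succ_double in G. exact G.
Qed.

End BackAndForth.
End Biorthogonal.

(* L is the matrix of the functionals f_i of the back-and-forth system. *)
Lemma normal_form (E : V -> Prop) :
  is_subspace k E -> dense k E -> countably_infinite_dim k E ->
  exists (a : nat -> V) (L L' : nat -> functional),
    spanning_seq E a /\ (forall j, matmap L (a j) = unitv j) /\ inverse_pair L L'.
Proof.
  intros HEs HEd [b [HbE [_ Hb]]].
  destruct (back_and_forth E HEs HEd b HbE) as [a [f [HaE [Hbo [Hba Hcoord]]]]].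
  assert (Hunit : forall j, matmap f (a j) = unitv j)
    by (intros j; extensionality i; apply Hbo).
  destruct (left_inverse_of_spanning_rows f) as [f' Hleft].
  { intros q. destruct (Hcoord q) as [n [c Hc]]. exists n, c.
    intros x. rewrite <- Hc. symmetry. apply leval_coord. }
  exists a, f, f'. split; [split | split].
  - exact HaE.
  - intros x Hx. destruct (Hb x Hx) as [n [c ->]]. apply span_lincomb. intros; apply Hba.
  - exact Hunit.
  - apply left_inverse_two_sided; [exact Hleft |]. intros j. exists (a j). apply Hunit.
Qed.

End Omega.

(* J = M^(-1) L maps a_j to e_j and then to b_j; it is row-finite with the row-finite
   inverse L^(-1) M, and a linear map matching spanning sequences maps E onto F. *)
Theorem theorem3p1 (k : field_choice) (E F : omega k -> Prop) :
  is_subspace k E -> dense k E -> countably_infinite_dim k E ->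
  is_subspace k F -> dense k F -> countably_infinite_dim k F ->
  exists J : omega k -> omega k,
    in_GL k J /\ (forall y, F y <-> exists x, E x /\ J x = y).
Proof.
  intros HEs HEd HEc HFs HFd HFc.
  destruct (normal_form k E HEs HEd HEc) as [a [L [L' [Ha [HLa HL]]]]].
  destruct (normal_form k F HFs HFd HFc) as [b [M [M' [Hb [HMb HM]]]]].
  set (J := matcomp k M' L).
  assert (HJ : inverse_pair k J (matcomp k L' M))
    by (apply inverse_pair_comp; [exact HL | apply inverse_pair_sym, HM]).
  assert (HJa : forall j, matmap k J (a j) = b j).
  { intros j. unfold J. rewrite matmap_comp, HLa, <- (HMb j). apply (proj1 HM). }
  exists (matmap k J). split; [exact (inverse_pair_GL k _ _ HJ) |].
  apply (linear_image_of_spanning k _ E F a b); auto using matmap_linear.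
Qed.
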